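(* Let $G$ be a group and $\mathcal{B}_1,\mathcal{B}_2:G\to G$ maps, and let $a\circ b=\mathcal{B}_1(a)b\mathcal{B}_2(a)$. The following are equivalent: (i) $(G,\mathcal{B}_1,\mathcal{B}_2)$ is a Rota-Baxter system of groups; (ii) $\circ$ is associative and $\mathcal{B}_1$ is a semigroup homomorphism from $(G,\circ)$ to $(G,\cdot)$; (iii) $\circ$ is associative and $\mathcal{B}_2$ is a semigroup anti-homomorphism from $(G,\circ)$ to $(G,\cdot)$, i.e. $\mathcal{B}_2(a\circ b)=\mathcal{B}_2(b)\mathcal{B}_2(a)$.
   Context: A Rota-Baxter system of groups is a triple $(G,\mathcal{B}_1,\mathcal{B}_2)$ where $G$ is a group and $\mathcal{B}_1,\mathcal{B}_2:G\to G$ are maps such that for all $a,b\in G$: $\mathcal{B}_1(a)\mathcal{B}_1(b)=\mathcal{B}_1(\mathcal{B}_1(a)b\mathcal{B}_2(a))$ and $\mathcal{B}_2(b)\mathcal{B}_2(a)=\mathcal{B}_2(\mathcal{B}_1(a)b\mathcal{B}_2(a))$. *)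

From HB Require Import structures.
From mathcomp Require Import all_boot.
From mathcomp Require Export monoid.

Set Implicit Arguments.
Unset Strict Implicit.
Unset Printing Implicit Defensive.

Local Open Scope group_scope.
Import Monoid.Theory.

Definition rbs_circ (G : groupType) (B1 B2 : G -> G) (a b : G) : G :=
  B1 a * b * B2 a.

Definition is_RB_system (G : groupType) (B1 B2 : G -> G) : Prop :=
  (forall a b : G, B1 a * B1 b = B1 (B1 a * b * B2 a)) /\
  (forall a b : G, B2 b * B2 a = B2 (B1 a * b * B2 a)).

From mathcomp Require Import all_boot.
From mathcomp Require Import monoid.

(* Both defining identities rewrite (a o b) o c and a o (b o c) into the same
   word B1(a) B1(b) c B2(b) B2(a), so either identity together with
   associativity of o yields the other: evaluating associativity at c = 1 gives
   B1(a o b) B2(a o b) = B1(a) B1(b) B2(b) B2(a), and one cancels the known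
   factor on the appropriate side. *)

Local Open Scope group_scope.

Section RotaBaxterSystem.

Context {G : groupType} {B1 B2 : G -> G}.

Local Notation circ := (rbs_circ B1 B2).

Lemma rbs_circA : is_RB_system B1 B2 -> associative circ.
Proof. by case=> B1M B2M a b c; rewrite /rbs_circ -B1M -B2M !mulgA. Qed.

Lemma rbs_circA_at1 (a b : G) : circ a (circ b 1) = circ (circ a b) 1 ->
  B1 (circ a b) * B2 (circ a b) = B1 a * B1 b * B2 b * B2 a.
Proof. by rewrite /rbs_circ !mulg1 !mulgA => ->. Qed.

Lemma rbs_B2_of_B1 : associative circ ->
  (forall a b, B1 (circ a b) = B1 a * B1 b) ->
  forall a b, B2 (circ a b) = B2 b * B2 a.
Proof.
move=> circA B1M a b; have := @rbs_circA_at1 a b (circA a b 1).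
by rewrite B1M -!mulgA => /mulgI/mulgI.
Qed.

Lemma rbs_B1_of_B2 : associative circ ->
  (forall a b, B2 (circ a b) = B2 b * B2 a) ->
  forall a b, B1 (circ a b) = B1 a * B1 b.
Proof.
move=> circA B2M a b; have := @rbs_circA_at1 a b (circA a b 1).
by rewrite B2M !mulgA => /mulIg/mulIg.
Qed.

End RotaBaxterSystem.

Theorem proposition3p2 (G : groupType) (B1 B2 : G -> G) :
  let circ := rbs_circ B1 B2 in
  (is_RB_system B1 B2 <->
     (associative circ /\ (forall a b : G, B1 (circ a b) = B1 a * B1 b))) /\
  (is_RB_system B1 B2 <->
     (associative circ /\ (forall a b : G, B2 (circ a b) = B2 b * B2 a))).
Proof.
move=> circ; split; split.
- by move=> RB; split; [exact: rbs_circA | case: RB => B1M _ a b; rewrite -B1M].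
- move=> [circA B1M]; split=> a b; first by rewrite B1M.
  by rewrite (rbs_B2_of_B1 circA B1M a b).
- by move=> RB; split; [exact: rbs_circA | case: RB => _ B2M a b; rewrite -B2M].
- move=> [circA B2M]; split=> a b; last by rewrite B2M.
  by rewrite (rbs_B1_of_B2 circA B2M a b).
Qed.
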